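(* Let $q_1=(x_1,1/x_1)$, $q_2=(x_2,y_2)$, $q_3=(1/y_3,y_3)$ with $x_1,x_2,y_2,y_3>0$, $x_1<x_2<1/y_3$, $y_3<y_2<1/x_1$ and $x_2y_2<1$. Suppose $$A:=1+(x_2-x_1)\,y_2+\Bigl(\frac1{y_3}-x_2\Bigr)y_3\ \ge\ 2.$$ Then $$T(q_1,q_2)+T(q_2,q_3)\ \ge\ A-1+\sinh(A-1).$$
   Context: For points $p=(x_p,y_p)$ and $q=(x_q,y_q)$ in $(0,\infty)^2$ define $$T(p,q):=\tfrac12\,(y_p-y_q+x_q-x_p)\,(x_p+y_q).$$ (In the paper, $q_1,q_2,q_3$ form a ''double step'' of a normalized tile with hyperbola $xy=1$, where $q_1,q_3$ lie on the hyperbola and $q_2$ lies strictly below it; $A$ is the tile area, $T(q_1,q_2)+T(q_2,q_3)$ its crown area, and the conclusion is $|C_t|/|t|\ge\xi_s(\rho_t)$ with $\rho_t=1/A\le 1/2$.) *)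

From Stdlib Require Import Reals.
Open Scope R_scope.

Definition T (p q : R * R) : R :=
  / 2 * (snd p - snd q + fst q - fst p) * (fst p + snd q).

From Stdlib Require Import Reals Lra Psatz.
Open Scope R_scope.

(* Put a = x1 y2, b = x2 y3, r = x2 y2 < 1 and p = y2 / x2; then A = 3 - D
   with D = 1 - r + a + b, and A >= 2 means 0 < D <= 1, i.e. a + b <= r.
   The proof has four steps.
   1. Twice the crown area equals 4 - 2D + p Q(a,b) + Q(b,a)/p for an explicit
      rational function Q of (a, b, r)  [crown_identity].
   2. AM-GM in p and a symmetrization argument (the product Q(a,b) Q(b,a)
      depends on a + b and a b only and decreases in a b) give
      p Q(a,b) + Q(b,a)/p >= 2 Q(w,w) with w = (a + b)/2.
   3. A polynomial inequality gives 2 - D + Q(w,w) >= B(D), where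
      B(D) = (2 - D + 4/D - D^2/2)/2  [diagonal_bound].
   4. Using exp(D-1) >= D and e <= 2.79 one gets
      A - 1 + sinh (A - 1) = 2 - D + sinh (2 - D) <= B(D)
      [sinh_below_crown_bound]. *)

Definition Q (a b r : R) : R := r * (1 - a) / a + b * (r - b) / r.

(* The product Q a b r * Q b a r as a function of s = a + b and p = a b. *)
Definition Phi (s p r : R) : R :=
  2*r - (1+r)*s + s^2 + r^2 + r^2*(1-s)/p - p*(1+s/r) + p^2/r^2.

Lemma crown_identity (x1 x2 y2 y3 : R) :
  0 < x1 -> 0 < x2 -> 0 < y2 -> 0 < y3 ->
  2 * (T (x1, / x1) (x2, y2) + T (x2, y2) (/ y3, y3))
  = 4 - 2 * (1 - x2 * y2 + x1 * y2 + x2 * y3)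
    + (y2 / x2 * Q (x1 * y2) (x2 * y3) (x2 * y2)
       + Q (x2 * y3) (x1 * y2) (x2 * y2) / (y2 / x2)).
Proof. intros. unfold T, Q; cbn [fst snd]. field. lra. Qed.

Lemma Q_product (a b r : R) : 0 < a -> 0 < b -> 0 < r ->
  Q a b r * Q b a r = Phi (a + b) (a * b) r.
Proof. intros. unfold Q, Phi. field. lra. Qed.

Lemma Phi_antitone (s p p' r : R) : 0 < r -> s <= 1 -> 0 <= s ->
  0 < p -> p <= p' -> p + p' <= r^2 -> Phi s p' r <= Phi s p r.
Proof.
  intros Hr Hs1 Hs0 Hp Hpp' Hsum.
  assert (E : Phi s p r - Phi s p' r
    = (p' - p) * (r^2*(1-s)/(p*p') + (1 + s/r) - (p+p')/r^2)).
  { unfold Phi. field. lra. }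
  assert (0 <= r^2*(1-s)/(p*p')).
  { apply Rle_mult_inv_pos; [apply Rmult_le_pos|]; nra. }
  assert (0 <= s/r) by (apply Rle_mult_inv_pos; lra).
  assert ((p+p')/r^2 <= 1).
  { apply (Rmult_le_reg_r (r^2)); [nra|]. unfold Rdiv.
    rewrite Rmult_assoc, Rinv_l; nra. }
  nra.
Qed.

Lemma Q_symmetrization (a b r : R) : 0 < a -> 0 < b -> a + b <= r -> r <= 1 ->
  Q ((a + b) / 2) ((a + b) / 2) r ^ 2 <= Q a b r * Q b a r.
Proof.
  intros Ha Hb Hsr Hr1.
  set (w := (a + b) / 2).
  assert (Hdiag : Q w w r ^ 2 = Phi (a + b) ((a + b)^2 / 4) r).
  { replace (Q w w r ^ 2) with (Q w w r * Q w w r) by ring.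
    rewrite Q_product by (unfold w; lra).
    unfold w. f_equal; field. }
  rewrite Hdiag, Q_product by lra.
  apply Phi_antitone; [lra | lra | lra | nra | | nra].
  pose proof (pow2_ge_0 (a - b)). lra.
Qed.

Lemma Q_nonneg (a b r : R) : 0 < a <= 1 -> 0 <= b <= r -> 0 < r -> 0 <= Q a b r.
Proof.
  intros. unfold Q.
  assert (0 <= r * (1 - a) / a) by (apply Rle_mult_inv_pos; nra).
  assert (0 <= b * (r - b) / r) by (apply Rle_mult_inv_pos; nra).
  lra.
Qed.

Lemma am_gm_bound (u v g : R) : 0 <= u -> 0 <= v -> 0 <= g -> g^2 <= u * v ->
  2 * g <= u + v.
Proof.
  intros Hu Hv Hg Hgg.
  destruct (Rle_or_lt (2 * g) (u + v)) as [Hle | Hlt]; [exact Hle |].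
  pose proof (pow2_ge_0 (u - v)). nra.
Qed.

(* The polynomial factor of 2 - D + Q w w r - B(D), with t = w / r in (0, 1/2]. *)
Lemma diagonal_polynomial_pos (r t : R) : 0 < t -> 2 * t <= 1 -> 0 < r -> r <= 1 ->
  0 < 4 - 5*t - r * (2*t*(2-t)*(1-2*t)) + r^2 * (t*(1-2*t)^3).
Proof.
  intros Ht Ht2 Hr Hr1.
  assert (0 <= t*(1-2*t)^3) by (apply Rmult_le_pos; [lra | apply pow_le; lra]).
  assert (0 <= 2*t*(2-t)*(1-2*t)) by (apply Rmult_le_pos; [apply Rmult_le_pos |]; lra).
  assert (2*t*(2-t)*(1-2*t) <= 1) by nra.
  nra.
Qed.

Definition crown_bound (D : R) : R := (2 - D + 4 / D - D^2 / 2) / 2.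

Lemma diagonal_bound (r w : R) : 0 < w -> 2 * w <= r -> r <= 1 ->
  crown_bound (1 - r + 2 * w) <= 2 - (1 - r + 2 * w) + Q w w r.
Proof.
  intros Hw Hwr Hr1.
  set (D := 1 - r + 2 * w). set (t := w / r).
  assert (HD : 0 < D) by (unfold D; lra).
  assert (Ht : 0 < t) by (apply Rdiv_lt_0_compat; lra).
  assert (Ht2 : 2 * t <= 1).
  { unfold t. apply (Rmult_le_reg_r r); [lra |].
    replace (2 * (w / r) * r) with (2 * w) by (field; lra). lra. }
  assert (E : 2 - D + Q w w r - crown_bound D
    = (1 - r) * r^2 * (4 - 5*t - r * (2*t*(2-t)*(1-2*t)) + r^2 * (t*(1-2*t)^3))
      / (4 * w * r * D)).
  { unfold Q, crown_bound, t, D. field. lra. }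
  assert (0 <= (1 - r) * r^2 * (4 - 5*t - r * (2*t*(2-t)*(1-2*t)) + r^2 * (t*(1-2*t)^3))
      / (4 * w * r * D)).
  { pose proof (diagonal_polynomial_pos r t Ht Ht2 ltac:(lra) Hr1).
    apply Rle_mult_inv_pos; [| repeat apply Rmult_lt_0_compat; lra].
    apply Rmult_le_pos; [apply Rmult_le_pos |]; nra. }
  lra.
Qed.

Lemma exp_mul_nat (n : nat) (x : R) : exp (INR n * x) = exp x ^ n.
Proof.
  induction n as [| n IH].
  - simpl. rewrite Rmult_0_l. apply exp_0.
  - rewrite S_INR, Rmult_plus_distr_r, Rmult_1_l, exp_plus, IH. simpl. ring.
Qed.

(* e <= (20/19)^20 < 2.79, from exp (-1/20) >= 19/20. *)
Lemma exp_1_upper_bound : exp 1 <= 279 / 100.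
Proof.
  assert (Hinv : 19 / 20 <= / exp (1 / 20)).
  { rewrite <- exp_Ropp. pose proof (exp_ineq1_le (- (1 / 20))). lra. }
  assert (Hstep : exp (1 / 20) <= 20 / 19).
  { pose proof (exp_pos (1 / 20)).
    replace (20 / 19) with (/ (19 / 20)) by field.
    rewrite <- (Rinv_inv (exp (1 / 20))).
    apply Rinv_le_contravar; lra. }
  replace 1 with (INR 20 * (1 / 20)) by (simpl; field).
  rewrite exp_mul_nat.
  apply Rle_trans with ((20 / 19) ^ 20).
  - apply pow_incr. pose proof (exp_pos (1 / 20)). lra.
  - lra.
Qed.

(* sinh (2 - D) = (e / exp (D-1) - exp (D-1) / e) / 2 and exp (D-1) >= D. *)
Lemma sinh_reflected_bound (D : R) : 0 < D ->
  sinh (2 - D) <= (exp 1 / D - D / exp 1) / 2.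
Proof.
  intros HD. unfold sinh.
  set (u := exp (D - 1)).
  assert (HDu : D <= u) by (pose proof (exp_ineq1_le (D - 1)); unfold u; lra).
  assert (E1 : exp (2 - D) = exp 1 * / u).
  { unfold u. rewrite <- exp_Ropp, <- exp_plus. f_equal. ring. }
  assert (E2 : exp (- (2 - D)) = u * / exp 1).
  { unfold u. rewrite <- exp_Ropp, <- exp_plus. f_equal. ring. }
  rewrite E1, E2. unfold Rdiv.
  pose proof (exp_pos 1).
  assert (/ u <= / D) by (apply Rinv_le_contravar; lra).
  assert (0 < / exp 1) by (apply Rinv_0_lt_compat; lra).
  nra.
Qed.

Lemma sinh_below_crown_bound (D : R) : 0 < D -> D <= 1 ->
  2 - D + sinh (2 - D) <= crown_bound D.
Proof.
  intros HD HD1.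
  pose proof (sinh_reflected_bound D HD).
  pose proof exp_1_upper_bound.
  set (e := exp 1) in *.
  assert (He : 2 <= e) by (pose proof (exp_ineq1_le 1); unfold e; lra).
  assert (Hinv_lo : 100 / 279 <= / e).
  { replace (100 / 279) with (/ (279 / 100)) by field. apply Rinv_le_contravar; lra. }
  assert (Hinv_hi : / e <= 1 / 2).
  { replace (1 / 2) with (/ 2) by field. apply Rinv_le_contravar; lra. }
  assert (Hpoly : 0 < 4 - D^3 / 2 + D^2 - 2 * D - e + D^2 * / e) by nra.
  assert (E : crown_bound D - (2 - D) - (e / D - D / e) / 2
    = (4 - D^3 / 2 + D^2 - 2 * D - e + D^2 * / e) * / (2 * D)).
  { unfold crown_bound. field. lra. }
  assert (0 <= (4 - D^3 / 2 + D^2 - 2 * D - e + D^2 * / e) * / (2 * D))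
    by (apply Rle_mult_inv_pos; lra).
  lra.
Qed.

Theorem mainTheorem5 (x1 x2 y2 y3 : R) :
  0 < x1 -> 0 < x2 -> 0 < y2 -> 0 < y3 ->
  x1 < x2 -> x2 < / y3 ->
  y3 < y2 -> y2 < / x1 ->
  x2 * y2 < 1 ->
  2 <= 1 + (x2 - x1) * y2 + (/ y3 - x2) * y3 ->
  let A := 1 + (x2 - x1) * y2 + (/ y3 - x2) * y3 in
  T (x1, / x1) (x2, y2) + T (x2, y2) (/ y3, y3) >= A - 1 + sinh (A - 1).
Proof.
  intros Hx1 Hx2 Hy2 Hy3 Hx12 Hx23 Hy32 Hy21 Hr1 HA2 A.
  change (2 <= A) in HA2.
  pose proof (crown_identity x1 x2 y2 y3 Hx1 Hx2 Hy2 Hy3) as Hcrown.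
  set (a := x1 * y2) in *. set (b := x2 * y3) in *.
  set (r := x2 * y2) in *. set (p := y2 / x2) in *.
  set (D := 1 - r + a + b) in *.
  assert (HA : A = 3 - D) by (unfold A, D, a, b, r; field; lra).
  assert (Ha1 : 0 < a <= 1).
  { assert (x1 * / x1 = 1) by (field; lra). unfold a; split; nra. }
  assert (Hbr : 0 < b < r) by (unfold b, r; split; nra).
  assert (Hsum : a + b <= r) by (unfold D in HA; lra).
  set (w := (a + b) / 2).
  assert (Hp : 0 < p) by (apply Rdiv_lt_0_compat; lra).
  assert (Hsym : Q w w r ^ 2 <= (p * Q a b r) * (Q b a r / p)).
  { replace ((p * Q a b r) * (Q b a r / p)) with (Q a b r * Q b a r) by (field; lra).
    apply Q_symmetrization; lra. }
  assert (Hamgm : 2 * Q w w r <= p * Q a b r + Q b a r / p).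
  { apply am_gm_bound; [| | apply Q_nonneg; unfold w; lra | exact Hsym].
    - apply Rmult_le_pos; [lra | apply Q_nonneg; lra].
    - apply Rle_mult_inv_pos; [apply Q_nonneg; lra | lra]. }
  assert (Hdiag : crown_bound D <= 2 - D + Q w w r).
  { replace D with (1 - r + 2 * w) by (unfold D, w; field).
    apply diagonal_bound; unfold w; lra. }
  pose proof (sinh_below_crown_bound D ltac:(unfold D; lra) ltac:(lra)) as Hsinh.
  rewrite HA. replace (3 - D - 1) with (2 - D) by ring.
  lra.
Qed.
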